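(* Let $s\ge1$, $h>0$, $q_0,p_0\in\mathbb{R}^m$, and suppose $u,v:[0,h]\to\mathbb{R}^m$ are polynomials of degree at most $s$ satisfying, for all $c\in[0,1]$, $$u(ch)=q_0+h\sum_{i=0}^{s-1}\Big(\int_0^cP_i(x)\,\mathrm{d}x\Big)\gamma_i(v),\qquad v(ch)=p_0+h\sum_{i=0}^{s-1}\Big(\int_0^cP_i(x)\,\mathrm{d}x\Big)\Big[-\eta_i(u)+\sum_{j=0}^{s-1}\rho_{ij}(u)\gamma_j(v)\Big].$$ Set $q_1=u(h)$, $p_1=v(h)$. Then $H(q_1,p_1)=H(q_0,p_0)$.
   Context: Let $U:\mathbb{R}^m\to\mathbb{R}$ be $C^1$ and $B:\mathbb{R}^m\to\mathbb{R}^{m\times m}$ continuous with $B(q)^\top=-B(q)$ for all $q$. This is a discretization of the problem $\dot q=p$, $\dot p=B(q)p-\nabla U(q)$, $q(0)=q_0$, $p(0)=p_0$ (for charged particle dynamics, $m=3$ and $B(q)p=p\times L(q)$ with $L$ the magnetic field and $-\nabla U$ the electric field), whose energy is $H(q,p)=\frac12p^\top p+U(q)$. $\{P_j\}_{j\ge0}$ is the orthonormal Legendre basis on $[0,1]$ ($\deg P_j=j$, $\int_0^1P_iP_j=\delta_{ij}$), and for a path $\sigma:[0,h]\to\mathbb{R}^m$: $\gamma_j(\sigma)=\int_0^1P_j(\tau)\sigma(\tau h)\mathrm{d}\tau$, $\eta_j(\sigma)=\int_0^1P_j(\tau)\nabla U(\sigma(\tau h))\mathrm{d}\tau$, $\rho_{ij}(\sigma)=\int_0^1P_i(\tau)P_j(\tau)B(\sigma(\tau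 h))\mathrm{d}\tau$. *)

From Stdlib Require Import Reals Lra ClassicalEpsilon.
Open Scope R_scope.

(* Vectors of R^m are modelled as functions nat -> R; only the components
   0 .. m-1 are meaningful.  Functions "on R^m" are required to depend only
   on these components (see [on_Rm]). *)
Definition vec := nat -> R.

Fixpoint rsum (n : nat) (f : nat -> R) : R :=
  match n with
  | O => 0
  | S n' => rsum n' f + f n'
  end.

Definition on_Rm {A : Type} (m : nat) (F : vec -> A) : Prop :=
  forall q q' : vec, (forall i, (i < m)%nat -> q i = q' i) -> F q = F q'.

Definition cont_Rm (m : nat) (F : vec -> R) : Prop :=
  forall (q : vec) (eps : R), 0 < eps ->
    exists del, 0 < del /\
      forall q' : vec, (forall i, (i < m)%nat -> Rabs (q' i - q i) < del) ->
        Rabs (F q' - F q) < eps.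

Definition vset (q : vec) (i : nat) (t : R) : vec :=
  fun k => if Nat.eqb k i then t else q k.

Definition is_gradient (m : nat) (U : vec -> R) (G : vec -> vec) : Prop :=
  forall (q : vec) (i : nat), (i < m)%nat ->
    derivable_pt_lim (fun t => U (vset q i t)) (q i) (G q i).

Definition C1_grad (m : nat) (U : vec -> R) (G : vec -> vec) : Prop :=
  on_Rm m U /\ is_gradient m U G /\
  forall i, (i < m)%nat -> cont_Rm m (fun q => G q i).

Definition cont_skew (m : nat) (B : vec -> nat -> nat -> R) : Prop :=
  on_Rm m B /\
  (forall i j, (i < m)%nat -> (j < m)%nat -> cont_Rm m (fun q => B q i j)) /\
  (forall q i j, (i < m)%nat -> (j < m)%nat -> B q i j = - B q j i).

(* Riemann integral of f over [a,b] (value chosen by epsilon; it is the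
   Riemann integral whenever f is Riemann integrable, which is the case for
   every integrand below since they are continuous). *)
Definition integral (f : R -> R) (a b : R) : R :=
  epsilon (inhabits 0)
    (fun I => exists pr : Riemann_integrable f a b, RiemannInt pr = I).

(* Orthonormal (shifted) Legendre polynomials on [0,1]:
   P_j(x) = sqrt(2j+1) * sum_{k=0}^{j} (-1)^(j+k) C(j,k) C(j+k,k) x^k,
   deg P_j = j, int_0^1 P_i P_j = delta_ij, P_j(1) > 0. *)
Definition legendre (j : nat) (x : R) : R :=
  sqrt (INR (2 * j + 1)) *
  rsum (S j) (fun k => (-1) ^ (j + k) * Binomial.C j k * Binomial.C (j + k) k * x ^ k).

Definition poly_le (s : nat) (h : R) (u : R -> vec) : Prop :=
  exists a : nat -> vec, forall t, 0 <= t <= h -> forall k,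
    u t k = rsum (S s) (fun n => a n k * t ^ n).

Definition gam (h : R) (sigma : R -> vec) (j k : nat) : R :=
  integral (fun tau => legendre j tau * sigma (tau * h) k) 0 1.

Definition eta (G : vec -> vec) (h : R) (sigma : R -> vec) (j k : nat) : R :=
  integral (fun tau => legendre j tau * G (sigma (tau * h)) k) 0 1.

Definition rho (B : vec -> nat -> nat -> R) (h : R) (sigma : R -> vec)
  (i j k l : nat) : R :=
  integral (fun tau => legendre i tau * legendre j tau * B (sigma (tau * h)) k l) 0 1.

Definition energy (m : nat) (U : vec -> R) (q p : vec) : R :=
  / 2 * rsum m (fun k => p k * p k) + U q.

(* Write L_i(c) = int_0^c P_i.  The collocation equations say that on [0,1]
   the stages are the paths
       Q(c) = q0 + h sum_i L_i(c) g_i,      V(c) = p0 + h sum_i L_i(c) w_i,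
   with g_i = gamma_i(v) = int_0^1 P_i V and
   w_i = -eta_i(u) + sum_j rho_ij(u) g_j, eta_i(u) = int_0^1 P_i grad U(Q).
   Since Q' = h sum_i P_i g_i and V' = h sum_i P_i w_i, the fundamental
   theorem of calculus applied to E(c) = H(Q(c), V(c)) gives
       H(q1,p1) - H(q0,p0) = h sum_i (w_i . g_i + g_i . eta_i)
                           = h sum_{i,j} g_i . rho_ij(u) g_j,
   which vanishes because rho_ji(u) = - rho_ij(u)^T (B is skew-symmetric). *)

From Stdlib Require Import Reals Lra Lia ClassicalEpsilon FunctionalExtensionality.
From Coquelicot Require Import Coquelicot.
Open Scope R_scope.

Lemma rsum_ext n f g : (forall i, (i < n)%nat -> f i = g i) -> rsum n f = rsum n g.
Proof.
  induction n as [|n IH]; intros H; simpl; [reflexivity|].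
  rewrite IH by (intros; apply H; lia). rewrite H by lia. reflexivity.
Qed.

Lemma rsum_plus n f g : rsum n (fun i => f i + g i) = rsum n f + rsum n g.
Proof. induction n; simpl; [ring | rewrite IHn; ring]. Qed.

Lemma rsum_mult_l n a f : a * rsum n f = rsum n (fun i => a * f i).
Proof. induction n; simpl; [ring | rewrite <- IHn; ring]. Qed.

Lemma rsum_zero n : rsum n (fun _ => 0) = 0.
Proof. induction n; simpl; [ring | rewrite IHn; ring]. Qed.

Lemma rsum_opp n f : rsum n (fun i => - f i) = - rsum n f.
Proof. induction n; simpl; [ring | rewrite IHn; ring]. Qed.

Lemma rsum_telescope n f : rsum n (fun k => f (S k) - f k) = f n - f O.
Proof. induction n; simpl; [ring | rewrite IHn; ring]. Qed.

Lemma rsum_swap n p f :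
  rsum n (fun a => rsum p (fun b => f a b)) = rsum p (fun b => rsum n (fun a => f a b)).
Proof. induction n; simpl; [now rewrite rsum_zero | now rewrite IHn, <- rsum_plus]. Qed.

Lemma rsum_reverse4 m s (T : nat -> nat -> nat -> nat -> R) :
  rsum m (fun k => rsum s (fun i => rsum s (fun j => rsum m (fun l => T k i j l)))) =
  rsum m (fun l => rsum s (fun j => rsum s (fun i => rsum m (fun k => T k i j l)))).
Proof.
  transitivity (rsum m (fun k => rsum s (fun i => rsum m (fun l => rsum s (fun j => T k i j l))))).
  { apply rsum_ext; intros; apply rsum_ext; intros; apply rsum_swap. }
  transitivity (rsum m (fun k => rsum m (fun l => rsum s (fun i => rsum s (fun j => T k i j l))))).
  { apply rsum_ext; intros; apply rsum_swap. }
  rewrite rsum_swap.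
  transitivity (rsum m (fun l => rsum m (fun k => rsum s (fun j => rsum s (fun i => T k i j l))))).
  { apply rsum_ext; intros; apply rsum_ext; intros; apply rsum_swap. }
  transitivity (rsum m (fun l => rsum s (fun j => rsum m (fun k => rsum s (fun i => T k i j l))))).
  { apply rsum_ext; intros; apply rsum_swap. }
  apply rsum_ext; intros; apply rsum_ext; intros; apply rsum_swap.
Qed.

(* A quadratic form whose coefficients are antisymmetric under exchanging the
   index pairs (k,i) and (l,j) vanishes; this is where skew-symmetry of B
   enters. *)
Lemma skew_form_vanishes m s (T : nat -> nat -> nat -> nat -> R) :
  (forall k i j l, (k < m)%nat -> (i < s)%nat -> (j < s)%nat -> (l < m)%nat ->
     T l j i k = - T k i j l) ->
  rsum m (fun k => rsum s (fun i => rsum s (fun j => rsum m (fun l => T k i j l)))) = 0.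
Proof.
  intros HT.
  assert (Hneg : rsum m (fun l => rsum s (fun j => rsum s (fun i => rsum m (fun k => T k i j l))))
    = - rsum m (fun k => rsum s (fun i => rsum s (fun j => rsum m (fun l => T k i j l))))).
  { do 4 (rewrite <- rsum_opp; apply rsum_ext; intros). apply HT; assumption. }
  rewrite rsum_reverse4 in Hneg. lra.
Qed.

Definition everywhere_continuous (f : R -> R) : Prop := forall x, continuity_pt f x.

Lemma continuity_pt_rsum n (f : nat -> R -> R) x :
  (forall i, (i < n)%nat -> continuity_pt (f i) x) ->
  continuity_pt (fun y => rsum n (fun i => f i y)) x.
Proof.
  induction n as [|n IH]; intros H; simpl.
  - apply continuity_pt_const. intros a b; reflexivity.
  - apply continuity_pt_plus; [apply IH; intros; apply H; lia | apply H; lia].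
Qed.

Lemma derivable_pt_lim_rsum n (f : nat -> R -> R) df x :
  (forall i, (i < n)%nat -> derivable_pt_lim (f i) x (df i)) ->
  derivable_pt_lim (fun y => rsum n (fun i => f i y)) x (rsum n df).
Proof.
  induction n as [|n IH]; intros H; simpl.
  - apply derivable_pt_lim_const.
  - apply derivable_pt_lim_plus; [apply IH; intros; apply H; lia | apply H; lia].
Qed.

Lemma continuity_pt_scal c f x : continuity_pt f x -> continuity_pt (fun y => c * f y) x.
Proof.
  intros H. apply continuity_pt_mult; [|exact H].
  apply continuity_pt_const. intros a b; reflexivity.
Qed.

Lemma derivable_pt_lim_continuity f x l : derivable_pt_lim f x l -> continuity_pt f x.
Proof. intros H. apply derivable_continuous_pt. exists l. exact H. Qed.

Lemma legendre_continuous j : everywhere_continuous (legendre j).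
Proof.
  intros x. unfold legendre. apply continuity_pt_scal, continuity_pt_rsum. intros i _.
  apply continuity_pt_scal. eapply derivable_pt_lim_continuity. apply derivable_pt_lim_pow.
Qed.

Lemma ex_RInt_everywhere_continuous f a b : everywhere_continuous f -> ex_RInt f a b.
Proof.
  intros H. apply (ex_RInt_continuous (V := R_CompleteNormedModule)).
  intros x _. apply continuity_pt_filterlim, H.
Qed.

Lemma integral_RInt f a b : ex_RInt f a b -> integral f a b = RInt f a b.
Proof.
  intros H. pose proof (ex_RInt_Reals_0 _ _ _ H) as pr.
  assert (Hex : exists I, exists pr0 : Riemann_integrable f a b, RiemannInt pr0 = I)
    by (exists (RiemannInt pr), pr; reflexivity).
  unfold integral. destruct (epsilon_spec (inhabits 0) _ Hex) as [pr1 <-].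
  symmetry. apply RInt_Reals.
Qed.

Lemma RInt_scal_R f a b c : everywhere_continuous f ->
  RInt (fun x => c * f x) a b = c * RInt f a b.
Proof.
  intros H. exact (RInt_scal (V := R_CompleteNormedModule) f a b c
                    (ex_RInt_everywhere_continuous f a b H)).
Qed.

Lemma RInt_lin f g a b c d : everywhere_continuous f -> everywhere_continuous g ->
  RInt (fun x => c * f x + d * g x) a b = c * RInt f a b + d * RInt g a b.
Proof.
  intros Hf Hg.
  rewrite (RInt_plus (V := R_CompleteNormedModule) (fun x => c * f x) (fun x => d * g x))
    by (apply ex_RInt_everywhere_continuous; intros x; apply continuity_pt_scal; auto).
  change (RInt (fun x => c * f x) a b + RInt (fun x => d * g x) a b
          = c * RInt f a b + d * RInt g a b).
  now rewrite !RInt_scal_R.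
Qed.

Lemma RInt_rsum n (f : nat -> R -> R) a b :
  (forall i, (i < n)%nat -> everywhere_continuous (f i)) ->
  RInt (fun x => rsum n (fun i => f i x)) a b = rsum n (fun i => RInt (f i) a b).
Proof.
  induction n as [|n IH]; intros H; simpl.
  - rewrite RInt_const. unfold scal; simpl. unfold mult; simpl. ring.
  - rewrite (RInt_plus (V := R_CompleteNormedModule) (fun x => rsum n (fun i => f i x)) (f n)).
    + rewrite IH by (intros; apply H; lia). reflexivity.
    + apply ex_RInt_everywhere_continuous. intros x.
      apply continuity_pt_rsum. intros i Hi. apply H; lia.
    + apply ex_RInt_everywhere_continuous, H; lia.
Qed.

Lemma RInt_derivative F f a b :
  (forall x, derivable_pt_lim F x (f x)) -> everywhere_continuous f ->
  RInt f a b = F b - F a.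
Proof.
  intros HF Hf. apply is_RInt_unique.
  apply (is_RInt_derive (V := R_CompleteNormedModule) F f).
  - intros x _. apply is_derive_Reals, HF.
  - intros x _. apply continuity_pt_filterlim, Hf.
Qed.

Lemma legendre_primitive_derivative i x :
  derivable_pt_lim (fun c => integral (legendre i) 0 c) x (legendre i x).
Proof.
  apply (derivable_pt_lim_ext (fun c => RInt (legendre i) 0 c)).
  { intros c. symmetry. apply integral_RInt, ex_RInt_everywhere_continuous, legendre_continuous. }
  apply is_derive_Reals.
  apply (is_derive_RInt (V := R_NormedModule) (legendre i) (fun c => RInt (legendre i) 0 c) 0).
  - apply filter_forall. intros y. apply (RInt_correct (V := R_CompleteNormedModule)).
    apply ex_RInt_everywhere_continuous, legendre_continuous.
  - apply continuity_pt_filterlim, legendre_continuous.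
Qed.

Lemma limit_rsum n (f : nat -> R -> R) l D x0 :
  (forall k, (k < n)%nat -> limit1_in (f k) D (l k) x0) ->
  limit1_in (fun y => rsum n (fun k => f k y)) D (rsum n l) x0.
Proof.
  induction n as [|n IH]; intros H; simpl.
  - exact (limit_free (fun _ => 0) D 0 x0).
  - apply limit_plus; [apply IH; intros; apply H; lia | apply H; lia].
Qed.

Lemma limit_squeeze f g D l x0 :
  (forall y, D y -> Rabs (f y - l) <= Rabs (g y - l)) ->
  limit1_in g D l x0 -> limit1_in f D l x0.
Proof.
  intros Hfg Hg eps Heps. destruct (Hg eps Heps) as [a [Ha Hg']].
  exists a. split; [exact Ha|]. intros y [Dy Hy]. simpl in *. unfold R_dist in *.
  eapply Rle_lt_trans; [apply Hfg, Dy | apply Hg'; auto].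
Qed.

Lemma continuity_increment_limit f x :
  continuity_pt f x -> limit1_in (fun hh => f (x + hh)) (fun hh => hh <> 0) (f x) 0.
Proof.
  intros Hf eps Heps. destruct (Hf eps Heps) as [a [Ha Hf']].
  exists a. split; [exact Ha|]. intros hh [Hh0 Hh]. simpl in *. unfold R_dist in *.
  apply Hf'. split.
  - split; [exact I | lra].
  - simpl. unfold R_dist. now replace (x + hh - x) with (hh - 0) by ring.
Qed.

Lemma limit_coords n (P : R -> vec) (a : vec) D x0 :
  (forall i, (i < n)%nat -> limit1_in (fun y => P y i) D (a i) x0) ->
  forall del, 0 < del -> exists alp, 0 < alp /\
    forall y, D y -> Rabs (y - x0) < alp ->
      forall i, (i < n)%nat -> Rabs (P y i - a i) < del.
Proof.
  induction n as [|n IH]; intros H del Hdel.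
  - exists 1. split; [lra | intros; lia].
  - destruct (IH (fun i Hi => H i ltac:(lia)) del Hdel) as [a1 [Ha1 H1]].
    destruct (H n ltac:(lia) del Hdel) as [a2 [Ha2 H2]]. simpl in H2. unfold R_dist in H2.
    exists (Rmin a1 a2). split; [now apply Rmin_pos|].
    intros y Dy Hy i Hi. destruct (Nat.eq_dec i n) as [->|Hne].
    + apply H2. split; [exact Dy | pose proof (Rmin_r a1 a2); lra].
    + apply H1; [exact Dy | pose proof (Rmin_l a1 a2); lra | lia].
Qed.

Lemma cont_Rm_limit m (F : vec -> R) (P : R -> vec) (a : vec) D x0 : cont_Rm m F ->
  (forall i, (i < m)%nat -> limit1_in (fun y => P y i) D (a i) x0) ->
  limit1_in (fun y => F (P y)) D (F a) x0.
Proof.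
  intros HF HP eps Heps. destruct (HF a eps Heps) as [d [Hd HFd]].
  destruct (limit_coords m P a D x0 HP d Hd) as [alp [Halp HPalp]].
  exists alp. split; [exact Halp|]. intros y [Dy Hy]. simpl in *. unfold R_dist in *.
  apply HFd. intros i Hi. apply HPalp; auto.
Qed.

Lemma cont_Rm_continuity m (F : vec -> R) (Q : R -> vec) x : cont_Rm m F ->
  (forall k, (k < m)%nat -> continuity_pt (fun c => Q c k) x) ->
  continuity_pt (fun c => F (Q c)) x.
Proof. intros HF HQ. exact (cont_Rm_limit m F Q (Q x) _ x HF HQ). Qed.

Lemma cont_Rm_on_Rm m (F : vec -> R) : cont_Rm m F -> on_Rm m F.
Proof.
  intros HF q q' Hqq'. destruct (Req_dec (F q) (F q')) as [Heq|Hne]; [exact Heq|].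
  assert (Hpos : 0 < Rabs (F q' - F q)) by (apply Rabs_pos_lt; lra).
  destruct (HF q _ Hpos) as [d [Hd HFd]].
  assert (Rabs (F q' - F q) < Rabs (F q' - F q)); [|lra].
  apply HFd. intros i Hi. rewrite Hqq' by exact Hi. now rewrite Rminus_diag, Rabs_R0.
Qed.

Lemma cont_Rm_coord m k : (k < m)%nat -> cont_Rm m (fun q => q k).
Proof. intros Hk q eps Heps. exists eps. split; [exact Heps | intros q' Hq'; auto]. Qed.

(* The increment
   U b - U a is split into m one-coordinate increments through the points
   [hybrid k a b] (first k coordinates from b, the others from a), each of
   which is handled by the one-variable mean value theorem. *)

Definition hybrid (k : nat) (a b : vec) : vec :=
  fun i => if Nat.ltb i k then b i else a i.

Lemma hybrid_succ k a b : hybrid (S k) a b = vset (hybrid k a b) k (b k).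
Proof.
  apply functional_extensionality; intros i. unfold vset, hybrid.
  destruct (Nat.eqb_spec i k) as [->|Hne].
  - now rewrite (proj2 (Nat.ltb_lt k (S k))) by lia.
  - destruct (Nat.ltb_spec i (S k)), (Nat.ltb_spec i k); auto; lia.
Qed.

Lemma hybrid_current k a b : hybrid k a b = vset (hybrid k a b) k (a k).
Proof.
  apply functional_extensionality; intros i. unfold vset, hybrid.
  destruct (Nat.eqb_spec i k) as [->|]; [now rewrite Nat.ltb_irrefl | reflexivity].
Qed.

Lemma hybrid_telescope m (U : vec -> R) a b : on_Rm m U ->
  U b - U a = rsum m (fun k => U (hybrid (S k) a b) - U (hybrid k a b)).
Proof.
  intros HU. rewrite (rsum_telescope m (fun k => U (hybrid k a b))).
  assert (Hend : U (hybrid m a b) = U b).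
  { apply HU. intros i Hi. unfold hybrid. now rewrite (proj2 (Nat.ltb_lt i m)). }
  now rewrite Hend.
Qed.

Lemma coordinate_mean_value m U G y k a b : is_gradient m U G -> (k < m)%nat ->
  exists xi, U (vset y k b) - U (vset y k a) = G (vset y k xi) k * (b - a) /\
             Rabs (xi - a) <= Rabs (b - a).
Proof.
  intros HG Hk.
  assert (Hline : forall c, derivable_pt_lim (fun t => U (vset y k t)) c (G (vset y k c) k)).
  { intros c. pose proof (HG (vset y k c) k Hk) as Hd.
    unfold vset at 3 in Hd. rewrite Nat.eqb_refl in Hd.
    eapply derivable_pt_lim_ext; [|exact Hd]. intros t. simpl. f_equal.
    apply functional_extensionality; intros i. unfold vset. now destruct (Nat.eqb i k). }
  destruct (Rtotal_order a b) as [Hlt|[->|Hgt]].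
  - destruct (MVT_cor2 _ _ a b Hlt (fun c _ => Hline c)) as [xi [Hxi Hin]].
    exists xi. split; [exact Hxi|]. rewrite !Rabs_right by lra. lra.
  - exists b. split; [ring | rewrite Rminus_diag, Rabs_R0; lra].
  - destruct (MVT_cor2 _ _ b a Hgt (fun c _ => Hline c)) as [xi [Hxi Hin]].
    exists xi. split; [lra|]. rewrite !Rabs_left by lra. lra.
Qed.

Lemma C1_mean_value m U G (a b : vec) : C1_grad m U G ->
  exists z : nat -> vec,
    U b - U a = rsum m (fun k => G (z k) k * (b k - a k)) /\
    forall k i, (k < m)%nat -> Rabs (z k i - a i) <= Rabs (b i - a i).
Proof.
  intros [HU [HG _]].
  assert (Hstep : forall k, exists zk : vec, (k < m)%nat ->
     U (hybrid (S k) a b) - U (hybrid k a b) = G zk k * (b k - a k) /\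
     forall i, Rabs (zk i - a i) <= Rabs (b i - a i)).
  { intros k. destruct (Nat.lt_ge_cases k m) as [Hk|Hk]; [|exists a; lia].
    destruct (coordinate_mean_value m U G (hybrid k a b) k (a k) (b k) HG Hk)
      as [xi [Hxi Hbound]].
    exists (vset (hybrid k a b) k xi). intros _. split.
    - rewrite hybrid_succ. rewrite <- hybrid_current in Hxi. exact Hxi.
    - intros i. unfold vset, hybrid. destruct (Nat.eqb_spec i k) as [->|_]; [exact Hbound|].
      destruct (Nat.ltb i k); [apply Rle_refl|].
      rewrite Rminus_diag, Rabs_R0. apply Rabs_pos. }
  destruct (choice _ Hstep) as [z Hz]. exists z. split.
  - rewrite (hybrid_telescope m U a b HU). apply rsum_ext. intros k Hk. apply Hz, Hk.
  - intros k i Hk. apply Hz, Hk.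
Qed.

Lemma C1_chain_rule m U G (Q : R -> vec) (dQ : vec) x : C1_grad m U G ->
  (forall k, (k < m)%nat -> derivable_pt_lim (fun c => Q c k) x (dQ k)) ->
  derivable_pt_lim (fun c => U (Q c)) x (rsum m (fun k => G (Q x) k * dQ k)).
Proof.
  intros HC HQ. pose proof HC as [_ [_ HGc]].
  destruct (choice _ (fun hh => C1_mean_value m U G (Q x) (Q (x + hh)) HC)) as [Z HZ].
  apply uniqueness_step3.
  apply limit1_ext with
    (f := fun hh => rsum m (fun k => G (Z hh k) k * ((Q (x + hh) k - Q x k) / hh))).
  { intros hh _. rewrite (proj1 (HZ hh)). unfold Rdiv.
    rewrite Rmult_comm, rsum_mult_l. apply rsum_ext. intros; ring. }
  apply limit_rsum. intros k Hk. apply limit_mul.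
  - apply (cont_Rm_limit m (fun q => G q k)); [now apply HGc|].
    intros i Hi. apply limit_squeeze with (g := fun hh => Q (x + hh) i).
    + intros hh _. now apply (proj2 (HZ hh)).
    + apply (continuity_increment_limit (fun c => Q c i)).
      eapply derivable_pt_lim_continuity. now apply HQ.
  - apply (uniqueness_step2 (fun c => Q c k)), HQ, Hk.
Qed.

Definition colloc (s : nat) (h : R) (a : vec) (cf : nat -> vec) (c : R) : vec :=
  fun k => a k + h * rsum s (fun i => integral (legendre i) 0 c * cf i k).

Definition colloc_velocity (s : nat) (h : R) (cf : nat -> vec) (c : R) : vec :=
  fun k => h * rsum s (fun i => legendre i c * cf i k).

Lemma colloc_derivable s h a cf k x :
  derivable_pt_lim (fun c => colloc s h a cf c k) x (colloc_velocity s h cf x k).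
Proof.
  unfold colloc, colloc_velocity.
  replace (h * rsum s (fun i => legendre i x * cf i k))
    with (0 + (0 * rsum s (fun i => integral (legendre i) 0 x * cf i k) +
               h * rsum s (fun i => legendre i x * cf i k + integral (legendre i) 0 x * 0)))
    by (rewrite (rsum_ext s (fun i => legendre i x * cf i k + integral (legendre i) 0 x * 0)
                  (fun i => legendre i x * cf i k)) by (intros; ring); ring).
  apply derivable_pt_lim_plus; [apply derivable_pt_lim_const|].
  apply derivable_pt_lim_mult; [apply derivable_pt_lim_const|].
  apply derivable_pt_lim_rsum. intros i _.
  apply derivable_pt_lim_mult; [apply legendre_primitive_derivative | apply derivable_pt_lim_const].
Qed.

Lemma colloc_continuous s h a cf k : everywhere_continuous (fun c => colloc s h a cf c k).
Proof. intros x. eapply derivable_pt_lim_continuity. apply colloc_derivable. Qed.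

Lemma colloc_start s h a cf k : colloc s h a cf 0 k = a k.
Proof.
  unfold colloc. rewrite (rsum_ext s _ (fun _ => 0)), rsum_zero; [ring|].
  intros i _. rewrite integral_RInt, RInt_point by
    (apply ex_RInt_everywhere_continuous, legendre_continuous).
  unfold zero; simpl. ring.
Qed.

Lemma energy_ext m U q q' p p' : on_Rm m U ->
  (forall k, (k < m)%nat -> q k = q' k) -> (forall k, (k < m)%nat -> p k = p' k) ->
  energy m U q p = energy m U q' p'.
Proof.
  intros HU Hq Hp. unfold energy. f_equal; [|now apply HU].
  f_equal. apply rsum_ext. intros k Hk. now rewrite Hp.
Qed.

Lemma energy_derivative m U G (Q V : R -> vec) (dQ dV : vec) x : C1_grad m U G ->
  (forall k, (k < m)%nat -> derivable_pt_lim (fun c => Q c k) x (dQ k)) ->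
  (forall k, (k < m)%nat -> derivable_pt_lim (fun c => V c k) x (dV k)) ->
  derivable_pt_lim (fun c => energy m U (Q c) (V c)) x
    (rsum m (fun k => V x k * dV k + G (Q x) k * dQ k)).
Proof.
  intros HC HQ HV. unfold energy.
  replace (rsum m (fun k => V x k * dV k + G (Q x) k * dQ k))
    with (0 * rsum m (fun k => V x k * V x k) +
          / 2 * rsum m (fun k => dV k * V x k + V x k * dV k) +
          rsum m (fun k => G (Q x) k * dQ k)).
  2: { rewrite (rsum_ext m (fun k => dV k * V x k + V x k * dV k)
                  (fun k => 2 * (V x k * dV k))) by (intros; ring).
       rewrite <- rsum_mult_l, rsum_plus. field. }
  apply derivable_pt_lim_plus; [|now apply C1_chain_rule].
  apply (derivable_pt_lim_mult (fun _ => / 2)); [apply derivable_pt_lim_const|].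
  apply derivable_pt_lim_rsum. intros k Hk. apply derivable_pt_lim_mult; now apply HV.
Qed.

Lemma energy_rate_colloc m s h U G q0 p0 (g w : nat -> vec) x : C1_grad m U G ->
  derivable_pt_lim (fun c => energy m U (colloc s h q0 g c) (colloc s h p0 w c)) x
    (h * rsum m (fun k => rsum s (fun i =>
        w i k * (legendre i x * colloc s h p0 w x k) +
        g i k * (legendre i x * G (colloc s h q0 g x) k)))).
Proof.
  intros HC.
  replace (h * _) with (rsum m (fun k =>
      colloc s h p0 w x k * colloc_velocity s h w x k +
      G (colloc s h q0 g x) k * colloc_velocity s h g x k)).
  - apply energy_derivative; auto; intros; apply colloc_derivable.
  - unfold colloc_velocity. rewrite rsum_mult_l. apply rsum_ext. intros k _.
    rewrite !rsum_mult_l, <- rsum_plus. apply rsum_ext. intros i _. ring.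
Qed.

Lemma energy_identity m s h U G q0 p0 (g w : nat -> vec) : C1_grad m U G ->
  energy m U (colloc s h q0 g 1) (colloc s h p0 w 1) -
  energy m U (colloc s h q0 g 0) (colloc s h p0 w 0) =
  h * rsum m (fun k => rsum s (fun i =>
        w i k * RInt (fun x => legendre i x * colloc s h p0 w x k) 0 1 +
        g i k * RInt (fun x => legendre i x * G (colloc s h q0 g x) k) 0 1)).
Proof.
  intros HC. pose proof HC as [_ [_ HGc]].
  pose proof (RInt_derivative _ _ 0 1 (fun x => energy_rate_colloc m s h U G q0 p0 g w x HC))
    as Hftc.
  set (Q := colloc s h q0 g) in *. set (V := colloc s h p0 w) in *.
  assert (HcV : forall i k, everywhere_continuous (fun x => legendre i x * V x k)).
  { intros i k x. apply continuity_pt_mult; [apply legendre_continuous | apply colloc_continuous]. }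
  assert (HcG : forall i k, (k < m)%nat ->
            everywhere_continuous (fun x => legendre i x * G (Q x) k)).
  { intros i k Hk x. apply continuity_pt_mult; [apply legendre_continuous|].
    apply (cont_Rm_continuity m (fun q => G q k)); [now apply HGc|].
    intros; apply colloc_continuous. }
  assert (Hsummand : forall i k, (k < m)%nat -> everywhere_continuous
            (fun x => w i k * (legendre i x * V x k) + g i k * (legendre i x * G (Q x) k))).
  { intros i k Hk x. apply continuity_pt_plus; apply continuity_pt_scal; [apply HcV | now apply HcG]. }
  assert (Hinner : forall k, (k < m)%nat -> everywhere_continuous (fun x => rsum s (fun i =>
            w i k * (legendre i x * V x k) + g i k * (legendre i x * G (Q x) k)))).
  { intros k Hk x. apply continuity_pt_rsum. intros i _. now apply Hsummand. }
  assert (Houter : everywhere_continuous (fun x => rsum m (fun k => rsum s (fun i =>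
            w i k * (legendre i x * V x k) + g i k * (legendre i x * G (Q x) k))))).
  { intros x. apply continuity_pt_rsum. intros k Hk. now apply Hinner. }
  rewrite <- Hftc by (intros x; now apply continuity_pt_scal).
  rewrite RInt_scal_R, RInt_rsum by assumption.
  f_equal. apply rsum_ext. intros k Hk. rewrite RInt_rsum by (intros; now apply Hsummand).
  apply rsum_ext. intros i _. apply RInt_lin; [apply HcV | now apply HcG].
Qed.

Lemma integral_along_path m h (F : vec -> R) (phi : R -> R) (u Q : R -> vec) :
  cont_Rm m F -> everywhere_continuous phi ->
  (forall k, (k < m)%nat -> everywhere_continuous (fun c => Q c k)) ->
  (forall c, 0 <= c <= 1 -> forall k, (k < m)%nat -> u (c * h) k = Q c k) ->
  integral (fun tau => phi tau * F (u (tau * h))) 0 1 =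
  RInt (fun tau => phi tau * F (Q tau)) 0 1.
Proof.
  intros HF Hphi HQ HuQ.
  assert (Hcont : everywhere_continuous (fun tau => phi tau * F (Q tau))).
  { intros x. apply continuity_pt_mult; [apply Hphi|].
    apply (cont_Rm_continuity m); [exact HF | intros; now apply HQ]. }
  assert (Hagree : forall tau, Rmin 0 1 < tau < Rmax 0 1 ->
            phi tau * F (Q tau) = phi tau * F (u (tau * h))).
  { intros tau Htau. rewrite Rmin_left, Rmax_right in Htau by lra. f_equal.
    apply (cont_Rm_on_Rm m F HF). intros k Hk. symmetry. apply HuQ; [lra | exact Hk]. }
  rewrite integral_RInt.
  - symmetry. now apply RInt_ext.
  - apply (ex_RInt_ext (V := R_NormedModule) _ _ 0 1 Hagree).
    now apply ex_RInt_everywhere_continuous.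
Qed.

Lemma collocation_balance m s (g e : nat -> vec) (r : nat -> nat -> nat -> nat -> R) :
  (forall i j k l, (k < m)%nat -> (l < m)%nat -> r j i l k = - r i j k l) ->
  rsum m (fun k => rsum s (fun i =>
    (- e i k + rsum s (fun j => rsum m (fun l => r i j k l * g j l))) * g i k +
    g i k * e i k)) = 0.
Proof.
  intros Hr. rewrite <- (skew_form_vanishes m s (fun k i j l => g i k * r i j k l * g j l)).
  - apply rsum_ext. intros k _. apply rsum_ext. intros i _.
    transitivity (g i k * rsum s (fun j => rsum m (fun l => r i j k l * g j l))); [ring|].
    rewrite rsum_mult_l. apply rsum_ext. intros j _.
    rewrite rsum_mult_l. apply rsum_ext. intros; ring.
  - intros k i j l Hk _ _ Hl. rewrite Hr by assumption. ring.
Qed.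

Lemma gam_along_path m h (v V : R -> vec) i k : (k < m)%nat ->
  (forall k, (k < m)%nat -> everywhere_continuous (fun c => V c k)) ->
  (forall c, 0 <= c <= 1 -> forall k, (k < m)%nat -> v (c * h) k = V c k) ->
  gam h v i k = RInt (fun x => legendre i x * V x k) 0 1.
Proof.
  intros Hk HV HvV.
  exact (integral_along_path m h (fun q => q k) (legendre i) v V
           (cont_Rm_coord m k Hk) (legendre_continuous i) HV HvV).
Qed.

Lemma eta_along_path m h U G (u Q : R -> vec) i k : C1_grad m U G -> (k < m)%nat ->
  (forall k, (k < m)%nat -> everywhere_continuous (fun c => Q c k)) ->
  (forall c, 0 <= c <= 1 -> forall k, (k < m)%nat -> u (c * h) k = Q c k) ->
  eta G h u i k = RInt (fun x => legendre i x * G (Q x) k) 0 1.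
Proof.
  intros [_ [_ HGc]] Hk HQ HuQ.
  exact (integral_along_path m h (fun q => G q k) (legendre i) u Q
           (HGc k Hk) (legendre_continuous i) HQ HuQ).
Qed.

Lemma rho_skew m h B (u Q : R -> vec) : cont_skew m B ->
  (forall k, (k < m)%nat -> everywhere_continuous (fun c => Q c k)) ->
  (forall c, 0 <= c <= 1 -> forall k, (k < m)%nat -> u (c * h) k = Q c k) ->
  forall i j k l, (k < m)%nat -> (l < m)%nat -> rho B h u j i l k = - rho B h u i j k l.
Proof.
  intros [_ [HBc HBskew]] HQ HuQ i j k l Hk Hl.
  assert (Halong : forall a b c d, (c < m)%nat -> (d < m)%nat ->
            rho B h u a b c d =
            RInt (fun x => (legendre a x * legendre b x) * B (Q x) c d) 0 1).
  { intros a b c d Hc Hd.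
    apply (integral_along_path m h (fun q => B q c d) (fun x => legendre a x * legendre b x));
      auto.
    intros x. apply continuity_pt_mult; apply legendre_continuous. }
  rewrite !Halong by assumption.
  transitivity (RInt (fun x => -1 * (legendre i x * legendre j x * B (Q x) k l)) 0 1).
  - apply RInt_ext. intros x _. rewrite (HBskew (Q x) l k) by assumption.
    change ((legendre j x * legendre i x * - B (Q x) k l)
            = -1 * (legendre i x * legendre j x * B (Q x) k l) :> R). ring.
  - rewrite RInt_scal_R; [ring|]. intros x.
    apply continuity_pt_mult; [apply continuity_pt_mult; apply legendre_continuous|].
    apply (cont_Rm_continuity m (fun q => B q k l)); [now apply HBc | intros; now apply HQ].
Qed.

Theorem theorem1 (m s : nat) (h : R) (U : vec -> R) (G : vec -> vec)
  (B : vec -> nat -> nat -> R) (q0 p0 : vec) (u v : R -> vec) :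
  (1 <= s)%nat -> 0 < h ->
  C1_grad m U G -> cont_skew m B ->
  poly_le s h u -> poly_le s h v ->
  (forall c, 0 <= c <= 1 -> forall k, (k < m)%nat ->
     u (c * h) k = q0 k + h * rsum s (fun i =>
        integral (legendre i) 0 c * gam h v i k)) ->
  (forall c, 0 <= c <= 1 -> forall k, (k < m)%nat ->
     v (c * h) k = p0 k + h * rsum s (fun i =>
        integral (legendre i) 0 c *
        (- eta G h u i k +
         rsum s (fun j => rsum m (fun l => rho B h u i j k l * gam h v j l))))) ->
  energy m U (u h) (v h) = energy m U q0 p0.
Proof.
  intros _ _ HC HB _ _ Hu Hv. pose proof HC as [HUon _].
  set (g := gam h v).
  set (w := fun i k => - eta G h u i k +
              rsum s (fun j => rsum m (fun l => rho B h u i j k l * g j l))).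
  pose proof (energy_identity m s h U G q0 p0 g w HC) as Hidentity.
  set (Q := colloc s h q0 g) in *. set (V := colloc s h p0 w) in *.
  (* The collocation equations say exactly that the stages are Q and V. *)
  assert (HuQ : forall c, 0 <= c <= 1 -> forall k, (k < m)%nat -> u (c * h) k = Q c k)
    by exact Hu.
  assert (HvV : forall c, 0 <= c <= 1 -> forall k, (k < m)%nat -> v (c * h) k = V c k)
    by exact Hv.
  pose proof (fun k (_ : (k < m)%nat) => colloc_continuous s h q0 g k) as HcQ.
  pose proof (fun k (_ : (k < m)%nat) => colloc_continuous s h p0 w k) as HcV.
  replace (energy m U (u h) (v h)) with (energy m U (Q 1) (V 1)).
  2: { apply energy_ext; auto; intros k Hk; rewrite <- (Rmult_1_l h);
       symmetry; [apply HuQ | apply HvV]; auto; lra. }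
  replace (energy m U q0 p0) with (energy m U (Q 0) (V 0))
    by (apply energy_ext; auto; intros; apply colloc_start).
  apply Rminus_diag_uniq. rewrite Hidentity.
  rewrite (rsum_ext m _ (fun k => rsum s (fun i => w i k * g i k + g i k * eta G h u i k))).
  - unfold w. rewrite collocation_balance; [ring|]. now apply (rho_skew m h B u Q).
  - intros k Hk. apply rsum_ext. intros i _.
    now rewrite (gam_along_path m h v V), (eta_along_path m h U G u Q).
Qed.
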